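(* For any simple directed graph $\mathbb G$ with $n\ge 2$ vertices and $m$ arcs, $a(\mathbb G)\le \frac{m}{n-1}$.
   Context: A simple directed graph has no self-arcs and no repeated arcs. The (in-degree) Laplacian of $\mathbb G$ on $\{1,\dots,n\}$ is $L=D-A$, $D$ the diagonal matrix of in-degrees, $A_{ij}=1$ if $(j,i)$ is an arc and $0$ otherwise. $a(\mathbb G)$ is the second smallest real part among the $n$ eigenvalues of $L$ counted with algebraic multiplicity. *)

From HB Require Import structures.
From mathcomp Require Import all_boot all_order all_algebra all_field.
Set Implicit Arguments. Unset Strict Implicit. Unset Printing Implicit Defensive.
Import Order.TTheory GRing.Theory Num.Theory.
Local Open Scope ring_scope.

(* A simple directed graph on vertex set 'I_n is an irreflexive relation
   E : rel 'I_n;  E j i  means that (j,i) is an arc.  A relation cannot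
   repeat arcs, and irreflexivity forbids self-arcs. *)
Definition simple_digraph (n : nat) (E : rel 'I_n) : Prop :=
  forall i, E i i = false.

Definition num_arcs (n : nat) (E : rel 'I_n) : nat :=
  #|[set p : 'I_n * 'I_n | E p.1 p.2]|.

Definition indeg (n : nat) (E : rel 'I_n) (i : 'I_n) : nat :=
  #|[set j : 'I_n | E j i]|.

Definition adjmx (n : nat) (E : rel 'I_n) : 'M[algC]_n :=
  \matrix_(i, j) (E j i)%:R.

Definition laplacian (n : nat) (E : rel 'I_n) : 'M[algC]_n :=
  diag_mx (\row_i (indeg E i)%:R) - adjmx E.

Definition eigenvalues_mult (n : nat) (M : 'M[algC]_n) (s : seq algC) : Prop :=
  char_poly M = \prod_(z <- s) ('X - z%:P).

Definition second_smallest_Re (s : seq algC) : algC :=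
  nth 0 (sort <=%R [seq 'Re z | z <- s]) 1.

From HB Require Import structures.
From mathcomp Require Import all_boot all_order all_algebra all_field.
Import Order.TTheory GRing.Theory Num.Theory.
Local Open Scope ring_scope.

(* The in-degree Laplacian has nonpositive off-diagonal entries and zero row
   sums, so by Gershgorin's theorem for rows each eigenvalue z satisfies
   |z - d| <= d for some in-degree d; hence Re z >= 0. The eigenvalues sum to
   the trace, i.e. to the sum of the in-degrees, which is m. Sorting the real
   parts, the smallest is nonnegative and the other n - 1 are at least the
   second smallest a, so (n - 1) a <= m. *)

Lemma char_poly_trmx (R : comNzRingType) n (A : 'M[R]_n) :
  char_poly A^T = char_poly A.
Proof.
rewrite /char_poly -det_tr; congr (\det _).
by apply/matrixP => i j; rewrite !mxE eq_sym.
Qed.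

Lemma real_argmax {R : numDomainType} {I : finType} (f : I -> R) (i0 : I) :
  (forall i, f i \is Num.real) -> exists i, forall j, f j <= f i.
Proof.
move=> f_real.
suff [i imax] : exists i, forall j, j \in enum I -> f j <= f i.
  by exists i => j; apply: imax; rewrite mem_enum.
elim: (enum I) => [|a s [i imax]]; first by exists i0.
have /orP [le_ia | le_ai] := real_leVge (f_real i) (f_real a).
- exists a => j; rewrite inE => /predU1P [-> // | /imax le_ji].
  exact: le_trans le_ji le_ia.
- by exists i => j; rewrite inE => /predU1P [-> // | /imax].
Qed.

Lemma gershgorin_row (C : numClosedFieldType) n (A : 'M[C]_n) z :
  root (char_poly A) z -> exists i, `|z - A i i| <= \sum_(j | j != i) `|A i j|.
Proof.
(* [eigenvalue] is about row eigenvectors; transposing makes the eigenvector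
   equation run along the rows of A. *)
rewrite -char_poly_trmx -eigenvalue_root_char.
case/eigenvalueP=> v v_eigen v_neq0.
case: n A v v_eigen v_neq0 => [|n] A v v_eigen v_neq0.
  by rewrite (thinmx0 v) eqxx in v_neq0.
have [i imax] := real_argmax (fun j => `|v 0 j|) ord0 (fun _ => normr_real _).
exists i.
have vi_gt0 : 0 < `|v 0 i|.
  rewrite normr_gt0; apply: contraNneq v_neq0 => vi0.
  apply/eqP/rowP => j; apply/eqP; rewrite mxE -normr_le0.
  by rewrite (le_trans (imax j)) // vi0 normr0.
have row_i : (z - A i i) * v 0 i = \sum_(j | j != i) v 0 j * A i j.
  have := congr1 (fun w : 'rV_n.+1 => w 0 i) v_eigen; rewrite !mxE.
  under eq_bigr do rewrite mxE.
  rewrite (bigD1 i) //= => /(canRL (addKr _)) ->.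
  by rewrite mulrBl addrC (mulrC (A i i)).
rewrite -(ler_pM2r vi_gt0) -normrM row_i mulr_suml.
apply: le_trans (ler_norm_sum _ _ _) _; apply: ler_sum => j _.
by rewrite normrM mulrC ler_wpM2l.
Qed.

Lemma Re_ge0_in_disc (C : numClosedFieldType) (c z : C) :
  c \is Num.real -> `|z - c| <= c -> 0 <= 'Re z.
Proof.
move=> /Creal_ReP c_real z_near_c.
rewrite distrC in z_near_c.
have := le_trans (leif_Re_Creal (c - z)).1 z_near_c.
by rewrite raddfB /= c_real gerBl.
Qed.

Lemma mulrn_size_le_sum (R : numDomainType) (b : R) (r : seq R) :
  all (>= b) r -> b *+ size r <= \sum_(x <- r) x.
Proof.
elim: r => [|x r IHr] /=; first by rewrite big_nil.
by case/andP=> le_bx /IHr le_br; rewrite big_cons mulrS lerD.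
Qed.

Lemma sorted_nth1_le_sum {R : numDomainType} {t : seq R} :
  sorted <=%R t -> all (>= 0) t -> t`_1 *+ (size t).-1 <= \sum_(x <- t) x.
Proof.
case: t => [|a r] /=; first by rewrite big_nil.
move=> sorted_ar /andP [a_ge0 _]; rewrite big_cons -[_ *+ _]add0r lerD //.
case: r sorted_ar => [|b r] /=; first by rewrite big_nil.
case/andP=> _ path_br; apply: (@mulrn_size_le_sum _ _ (b :: r)).
by rewrite /= lexx le_path_min.
Qed.

Lemma sort_le_sorted_real (R : numDomainType) (r : seq R) :
  all (mem Num.real) r -> sorted <=%R (sort <=%R r).
Proof. exact/sort_sorted_in/real_leVge. Qed.

Section Laplacian.

Variables (n : nat) (E : rel 'I_n).

Lemma indegE i : indeg E i = (\sum_j E j i)%N.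
Proof.
rewrite /indeg -sum1dep_card big_mkcond.
by apply: eq_bigr => j _; case: (E j i).
Qed.

Lemma sum_indeg : (\sum_i indeg E i)%N = num_arcs E.
Proof.
under eq_bigr do rewrite indegE.
rewrite exchange_big pair_big /num_arcs -sum1dep_card [RHS]big_mkcond /=.
by apply: eq_bigr => p _; case: (E p.1 p.2).
Qed.

Hypothesis E_irrefl : simple_digraph E.

Lemma laplacian_diag i : laplacian E i i = (indeg E i)%:R.
Proof. by rewrite !mxE eqxx E_irrefl subr0. Qed.

Lemma laplacian_offdiag i j : i != j -> laplacian E i j = - (E j i)%:R.
Proof. by rewrite !mxE => /negPf ->; rewrite sub0r. Qed.

Lemma tr_laplacian : \tr (laplacian E) = (num_arcs E)%:R.
Proof.
rewrite /mxtrace (eq_bigr _ (fun i _ => laplacian_diag i)).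
by rewrite -natr_sum sum_indeg.
Qed.

Lemma laplacian_offdiag_norm_sum i :
  \sum_(j | j != i) `|laplacian E i j| = (indeg E i)%:R.
Proof.
rewrite indegE natr_sum [RHS](bigD1 i) //= E_irrefl add0r.
apply: eq_bigr => j ji.
by rewrite laplacian_offdiag 1?eq_sym // normrN normr_nat.
Qed.

Lemma Re_laplacian_eigenvalue_ge0 z :
  root (char_poly (laplacian E)) z -> 0 <= 'Re z.
Proof.
move=> /gershgorin_row [i]; rewrite laplacian_diag laplacian_offdiag_norm_sum.
exact/Re_ge0_in_disc/realn.
Qed.

End Laplacian.

Section EigenvalueList.

Context {n : nat} {M : 'M[algC]_n} {s : seq algC}.
Hypothesis M_eigenvalues : eigenvalues_mult M s.

Lemma size_eigenvalues : size s = n.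
Proof.
by apply: succn_inj; rewrite -(size_char_poly M) M_eigenvalues size_prod_XsubC.
Qed.

Lemma eigenvalues_root z : z \in s -> root (char_poly M) z.
Proof. by rewrite M_eigenvalues root_prod_XsubC. Qed.

Lemma sum_eigenvalues : (0 < n)%N -> \sum_(z <- s) z = \tr M.
Proof.
move=> n_gt0; apply: oppr_inj; rewrite -char_poly_trace // M_eigenvalues.
by rewrite -size_eigenvalues coefPn_prod_XsubC // size_eigenvalues -lt0n.
Qed.

End EigenvalueList.

Theorem lemma2 (n : nat) (E : rel 'I_n) (s : seq algC) :
  (2 <= n)%N -> simple_digraph E ->
  eigenvalues_mult (laplacian E) s ->
  second_smallest_Re s <= (num_arcs E)%:R / (n.-1)%:R.
Proof.
move=> n_ge2 E_irrefl L_eigenvalues.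
set t := sort <=%R [seq 'Re z | z <- s].
have perm_t : perm_eq t [seq 'Re z | z <- s] by rewrite perm_sort.
have sorted_t : sorted <=%R t.
  apply: sort_le_sorted_real.
  by apply/allP => _ /mapP [z _ ->]; apply: Creal_Re.
have t_ge0 : all (>= 0) t.
  rewrite (perm_all _ perm_t) all_map; apply/allP => z /= zs.
  exact/Re_laplacian_eigenvalue_ge0/(eigenvalues_root L_eigenvalues).
have sum_t : \sum_(x <- t) x = (num_arcs E)%:R.
  rewrite (perm_big _ perm_t) big_map -raddf_sum /=.
  rewrite (sum_eigenvalues L_eigenvalues) ?tr_laplacian 1?ltnW //.
  exact/Creal_ReP/realn.
have size_t : size t = n.
  by rewrite (perm_size perm_t) size_map (size_eigenvalues L_eigenvalues).
have := sorted_nth1_le_sum sorted_t t_ge0.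
rewrite /second_smallest_Re -/t size_t sum_t.
by rewrite ler_pdivlMr ?ltr0n ?ltn_predRL // mulr_natr.
Qed.
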